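(* Let $d\geq 2$ and $m\geq 1$ be integers, let $p=\frac{d+1}{d+m}$ and $Z=p\,\frac{I_d}{d}+(1-p)\,\frac{J_d}{d}$, where $J_d$ is the $d\times d$ all-ones matrix. Then $\mathcal{MR}\!\left(Z,\frac{I_{d+m}}{d+m}\right)\geq d+m$. Moreover, $\mathcal{MR}\!\left(Z,\frac{I_{d+m}}{d+m}\right)=d+m$ for all $m>\frac{d^2-2d-2}{2}$.
   Context: $M_n$ denotes the complex $n\times n$ matrices. For positive semidefinite $A\in M_{d_1}$, $B\in M_{d_2}$, $\mathcal{CP}(M_{d_1},M_{d_2};A,B)$ is the convex set of completely positive maps $\Phi:M_{d_1}\to M_{d_2}$ with $\Phi(I_{d_1})=B$ and $\Phi^*(I_{d_2})=A$ ($\Phi^*$ the Hilbert–Schmidt adjoint); equivalently $\Phi(X)=\sum_iK_iXK_i^\dagger$ with $\sum_iK_i^\dagger K_i=A$, $\sum_iK_iK_i^\dagger=B$. The Choi rank of $\Phi$ is the rank of $\sum_{r,s}E_{rs}\otimes\Phi(E_{rs})$. $\mathcal{MR}(A,B)$ denotes the maximum of the Choi ranks of the extreme points of $\mathcal{CP}(M_{d_1},M_{d_2};A,B)$ (equivalently, via the Choi–Jamiołkowski correspondence, the maximal rank of an extreme point of the convex set of bipartite states on $\mathbb{C}^{d_1}\otimes\mathbb{C}^{d_2}$ with the corresponding fixed marginals). *)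

From HB Require Import structures.
From mathcomp Require Import all_boot all_order all_algebra.
From mathcomp Require Import complex mxtens.
From mathcomp Require Import boolp reals.

Set Implicit Arguments.
Unset Strict Implicit.
Unset Printing Implicit Defensive.

Import Order.TTheory GRing.Theory Num.Theory.
Local Open Scope ring_scope.

Section QChannels.
Variable R : realType.
Local Notation C := (R[i]).

Definition hadj (m n : nat) (A : 'M[C]_(m, n)) : 'M[C]_(n, m) :=
  (map_mx Num.conj A)^T.

Definition CPset (d1 d2 : nat) (A : 'M[C]_d1) (B : 'M[C]_d2)
    (Phi : 'M[C]_d1 -> 'M[C]_d2) : Prop :=
  exists Ks : seq 'M[C]_(d2, d1),
    [/\ forall X : 'M[C]_d1, Phi X = \sum_(K <- Ks) K *m X *m hadj K,
        \sum_(K <- Ks) hadj K *m K = A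
      & \sum_(K <- Ks) K *m hadj K = B].

Definition extreme_point (d1 d2 : nat) (S : ('M[C]_d1 -> 'M[C]_d2) -> Prop)
    (Phi : 'M[C]_d1 -> 'M[C]_d2) : Prop :=
  S Phi /\
  forall (Phi1 Phi2 : 'M[C]_d1 -> 'M[C]_d2) (t : C),
    S Phi1 -> S Phi2 -> 0 < t -> t < 1 ->
    (forall X, Phi X = t *: Phi1 X + (1 - t) *: Phi2 X) ->
    Phi1 = Phi /\ Phi2 = Phi.

Definition choi (d1 d2 : nat) (Phi : 'M[C]_d1 -> 'M[C]_d2) : 'M[C]_(d1 * d2) :=
  \sum_(r < d1) \sum_(s < d1) (delta_mx r s *t Phi (delta_mx r s)).

Definition choi_rank (d1 d2 : nat) (Phi : 'M[C]_d1 -> 'M[C]_d2) : nat :=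
  \rank (choi Phi).

(* MR(A,B): maximum Choi rank of an extreme point of CP(M_d1,M_d2;A,B).
   Choi ranks are at most d1*d2, so the maximum ranges over 'I_(d1*d2).+1. *)
Definition MR (d1 d2 : nat) (A : 'M[C]_d1) (B : 'M[C]_d2) : nat :=
  \max_(n < (d1 * d2).+1 |
        `[< exists Phi, extreme_point (CPset A B) Phi /\ choi_rank Phi = n >])
     (n : nat).

Definition Zmx (d m : nat) : 'M[C]_d :=
  let p : C := (d.+1)%:R / (d + m)%:R in
  (p / d%:R) *: (1%:M) + ((1 - p) / d%:R) *: const_mx 1.

Definition maxmixed (n : nat) : 'M[C]_n := (n%:R)^-1 *: 1%:M.

End QChannels.

From HB Require Import structures.
From mathcomp Require Import all_boot all_order all_algebra.
From mathcomp Require Import complex mxtens.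
From mathcomp Require Import boolp reals.
From mathcomp Require Import sesquilinear spectral.
From mathcomp Require Import ring zify.

Set Implicit Arguments.
Unset Strict Implicit.
Unset Printing Implicit Defensive.
Import Order.TTheory GRing.Theory Num.Theory.
Local Open Scope ring_scope.

(* Let B be a (d+m) x d matrix with B^* B = Z such that B B^* has constant
   diagonal 1/(d+m) and no zero entry.  The channel X |-> diag (B X B^* ), with Kraus
   operators E_ii B, lies in CP(Z, I/(d+m)).  If it is a proper convex combination, every
   Kraus operator of a summand has its i-th row proportional to the i-th row of B, and the
   nonvanishing entries of B B^* then force the summand to be the channel itself; so the
   channel is extreme.  Its Choi matrix contains the invertible diagonal block
   (|B_ir|^2)_i, hence has rank at least d+m.

   Write an extreme point with Kraus operators K_k as
   X |-> sum_kl M_kl K_k X K_l^* with M = 1.  If a coefficient matrix H leaves both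
   marginals unchanged, the coefficients 1 +- eps H give points of the same set whose
   midpoint is the extreme point, so the map with coefficients H vanishes.  Its Choi matrix
   V^T H conj(V) ranges over a space of dimension at least r^2 (r the Choi rank), while
   fixing the marginals imposes at most d1^2 + d2^2 - 1 linear conditions (the two traces
   always agree).  Hence r^2 < d1^2 + d2^2, i.e. r <= d + m when d^2 < 2m + 2d + 2. *)

Section LinearAlgebra.
Variable K : fieldType.

Lemma exists_left_kernel p q (F : 'M[K]_(p, q)) (w : 'cV[K]_q) :
  w != 0 -> F *m w = 0 -> (q <= p)%N -> exists2 u : 'rV[K]_p, u != 0 & u *m F = 0.
Proof.
move=> w0 Fw qp.
have notfull : ~~ row_full F.
  apply: contra w0 => /row_fullP [F' F'F].
  by rewrite -(mul1mx w) -F'F -mulmxA Fw mulmx0.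
have : kermx F != 0.
  rewrite kermx_eq0; apply: contra notfull => /eqP freeF.
  by rewrite /row_full eqn_leq rank_leq_col freeF.
by case/rowV0Pn => u /sub_kermxP uF u0; exists u.
Qed.

Lemma mulmx_sandwich_inj a N b (X : 'M[K]_(a, N)) (Y : 'M[K]_(N, b)) :
  exists (S : 'M[K]_(N, \rank (X *m Y))) (T : 'M[K]_(\rank (X *m Y), N)),
    forall W, X *m (S *m W *m T) *m Y = 0 -> W = 0.
Proof.
set J := X *m Y.
have /row_fullP [P' P'P] := col_base_full J.
have /row_freeP [Q' QQ'] := row_base_free J.
set P := col_base J in P'P *; set Q := row_base J in QQ' *.
exists (Y *m Q'), (P' *m X) => W.
have JQ' : J *m Q' = P.
  by have := congr1 (mulmx^~ Q') (mulmx_base J); rewrite /= -mulmxA QQ' mulmx1.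
have P'J : P' *m J = Q.
  by have := congr1 (mulmx P') (mulmx_base J); rewrite /= mulmxA P'P mul1mx.
clearbody P Q.
have -> : X *m (Y *m Q' *m W *m (P' *m X)) *m Y = P *m W *m Q.
  by rewrite !mulmxA -(mulmxA _ X Y) -/J JQ' -!mulmxA P'J.
move=> PWQ; have := congr1 (fun M => P' *m M *m Q') PWQ.
by rewrite /= !mulmxA P'P mul1mx -mulmxA QQ' mulmx1 mulmx0 mul0mx.
Qed.

Lemma mxrank_mxsub m n m' n' (f : 'I_m' -> 'I_m) (g : 'I_n' -> 'I_n) (A : 'M[K]_(m, n)) :
  (\rank (mxsub f g A) <= \rank A)%N.
Proof.
rewrite -[A in mxsub _ _ A]mul1mx -[A in mxsub _ _ (_ *m A)]mulmx1 mxsub_mul.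
by rewrite -mulmx_colsub (leq_trans (mxrankM_maxr _ _)) ?mxrankM_maxl.
Qed.
End LinearAlgebra.

Lemma mxvec_mul_trmx1 (R : comPzRingType) n (X : 'M[R]_n) :
  mxvec X *m (mxvec 1%:M)^T = (\tr X)%:M.
Proof.
apply/rowP => i; rewrite {i}ord1 !mxE (reindex _ (curry_mxvec_bij _ _)) /=.
transitivity (\sum_(p : 'I_n * 'I_n) X p.1 p.2 * (p.1 == p.2)%:R).
  by apply: eq_bigr => [[i j]] _; rewrite !mxE !mxvecE !mxE.
rewrite -(pair_bigA _ (fun i j => X i j * (i == j)%:R)) mulr1n; apply: eq_bigr => i _ /=.
rewrite (bigD1 i) //= eqxx mulr1 big1 ?addr0 // => j ji.
by rewrite eq_sym (negPf ji) mulr0.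
Qed.

Section Adjoint.
Variable R : realType.
Local Notation C := R[i].

Lemma hadjE m n (A : 'M[C]_(m, n)) i j : hadj A i j = (A j i)^*.
Proof. by rewrite !mxE. Qed.

Lemma hadjK m n (A : 'M[C]_(m, n)) : hadj (hadj A) = A.
Proof. by apply/matrixP => i j; rewrite !hadjE conjCK. Qed.

Lemma hadj_mul m n p (A : 'M[C]_(m, n)) (B : 'M[C]_(n, p)) :
  hadj (A *m B) = hadj B *m hadj A.
Proof. by rewrite /hadj map_mxM trmx_mul. Qed.

Lemma hadjD m n (A B : 'M[C]_(m, n)) : hadj (A + B) = hadj A + hadj B.
Proof. by apply/matrixP => i j; rewrite !mxE rmorphD. Qed.

Lemma hadj0 m n : hadj (0 : 'M[C]_(m, n)) = 0.
Proof. by apply/matrixP => i j; rewrite !mxE rmorph0. Qed.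

Lemma hadj_sum m n I (r : seq I) (P : pred I) (F : I -> 'M[C]_(m, n)) :
  hadj (\sum_(i <- r | P i) F i) = \sum_(i <- r | P i) hadj (F i).
Proof. exact: (big_morph _ (@hadjD m n) (@hadj0 m n)). Qed.

Lemma hadjZ m n a (A : 'M[C]_(m, n)) : hadj (a *: A) = a^* *: hadj A.
Proof. by apply/matrixP => i j; rewrite !mxE rmorphM. Qed.

Lemma hadj_delta m n (i : 'I_m) (j : 'I_n) :
  hadj (delta_mx i j : 'M[C]_(m, n)) = delta_mx j i.
Proof. by apply/matrixP => a b; rewrite !mxE rmorph_nat andbC. Qed.

Lemma hadj_diag n (v : 'rV[C]_n) : hadj (diag_mx v) = diag_mx (map_mx Num.conj v).
Proof.
apply/matrixP => i j; rewrite !mxE eq_sym.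
by case: eqP => [->|_]; rewrite ?mulr1n // !mulr0n rmorph0.
Qed.

Lemma rV_hadj_eq0 n (v : 'rV[C]_n) : (v *m hadj v) 0 0 = 0 -> v = 0.
Proof.
move=> v0; apply/rowP => k; rewrite mxE.
have : \sum_k `|v 0 k| ^+ 2 = 0.
  by rewrite -[RHS]v0 mxE; apply: eq_bigr => l _; rewrite hadjE normCK.
move/psumr_eq0P => /(_ (fun l _ => exprn_ge0 2 (normr_ge0 _)) k isT) /eqP.
by rewrite expf_eq0 /= normr_eq0 => /eqP.
Qed.

Lemma mulmx_hadj_diagE m n (M : 'M[C]_(m, n)) X i :
  (M *m X *m hadj M) i i = (row i M *m X *m hadj (row i M)) 0 0.
Proof.
rewrite !mxE; apply: eq_bigr => k _; rewrite !mxE; congr (_ * _).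
by apply: eq_bigr => l _; rewrite !mxE.
Qed.

Lemma mulmx_rank1_hadj_diagE m n (M : 'M[C]_(m, n)) (v : 'rV[C]_n) i :
  (M *m (hadj v *m v) *m hadj M) i i = `|(row i M *m hadj v) 0 0| ^+ 2.
Proof.
rewrite mulmx_hadj_diagE mulmxA -mulmxA.
have -> : v *m hadj (row i M) = hadj (row i M *m hadj v) by rewrite hadj_mul hadjK.
by rewrite mxE big_ord1 hadjE normCK.
Qed.

Lemma mulmx_delta_hadjE m n p (M : 'M[C]_(m, n)) (N : 'M[C]_(p, n)) r s i j :
  (M *m delta_mx r s *m hadj N) i j = M i r * (N j s)^*.
Proof.
rewrite -(mul_delta_mx (0 : 'I_1)) mulmxA -colE -mulmxA -rowE.
by rewrite mxE big_ord1 !mxE.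
Qed.

Lemma mulmx_hadjE m n p (A : 'M[C]_(m, n)) (B : 'M[C]_(p, n)) i j :
  (A *m hadj B) i j = (row i A *m hadj (row j B)) 0 0.
Proof. by rewrite !mxE; apply: eq_bigr => k _; rewrite !mxE. Qed.

Lemma rows_proportional m n (L B : 'M[C]_(m, n)) :
  (forall i, (B *m hadj B) i i != 0) ->
  (forall i (v : 'rV[C]_n), (row i B *m hadj v) 0 0 = 0 -> (row i L *m hadj v) 0 0 = 0) ->
  L = diag_mx (\row_i ((L *m hadj B) i i / (B *m hadj B) i i)) *m B.
Proof.
move=> Bii orth; apply/row_matrixP => i.
rewrite row_mul row_diag_mx -scalemxAl -rowE mxE.
set a := _ / _; set r := row i L - a *: row i B.
have entryBZ (X Y : 'M[C]_1) b : (X - b *: Y) 0 0 = X 0 0 - b * Y 0 0 by rewrite !mxE.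
have rB : (r *m hadj (row i B)) 0 0 = 0.
  by rewrite mulmxBl -scalemxAl entryBZ -!mulmx_hadjE divfK ?subrr.
have Br : (row i B *m hadj r) 0 0 = 0.
  by rewrite -[row i B]hadjK -hadj_mul hadjE rB conjC0.
have : (r *m hadj r) 0 0 = 0.
  by rewrite {1}/r mulmxBl -scalemxAl entryBZ orth // Br mulr0 subrr.
by move/rV_hadj_eq0/eqP; rewrite subr_eq0 => /eqP.
Qed.

Lemma hermitian_gram_perturb n (H : 'M[C]_n) : hadj H = H ->
  exists2 eps : C, 0 < eps & forall c : C, c \is Num.real -> `|c| <= eps ->
    exists G : 'M[C]_n, hadj G *m G = 1%:M + c *: H.
Proof.
move=> Hherm.
have Hh : H \is hermsymmx.
  by apply/is_hermitianmxP; rewrite expr0 scale1r -[in LHS]Hherm /hadj map_trmx.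
have /orthomx_spectralP HU := hermitian_normalmx Hh.
set U := spectralmx H in HU; set D := spectral_diag H in HU.
have Uu : U \is unitarymx := spectral_unitarymx H.
have Uinv : invmx U = hadj U by rewrite invmx_unitary // /hadj map_trmx.
have UhU : hadj U *m U = 1%:M by rewrite -Uinv mulVmx ?unitarymx_unit.
have Dr i : D 0 i \is Num.real by have /mxOverP := hermitian_spectral_diag_real Hh; apply.
set mu := 1 + \sum_i `|D 0 i|.
have Dmu i : `|D 0 i| <= mu.
  rewrite /mu (bigD1 i) //= addrCA lerDl addr_ge0 ?ler01 //.
  by rewrite sumr_ge0.
have mu_gt0 : 0 < mu by apply: lt_le_trans ltr01 _; rewrite lerDl sumr_ge0.
exists mu^-1 => [|c creal cle]; first by rewrite invr_gt0.
have cD_ge0 i : 0 <= 1 + c * D 0 i.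
  have : `|c * D 0 i| <= 1.
    by rewrite normrM -(mulVf (negbT (gt_eqF mu_gt0))) ler_pM.
  rewrite real_ler_norml ?rpredM // => /andP [cD_ge _].
  by rewrite addrC -lerBlDr sub0r.
exists (diag_mx (\row_i sqrtC (1 + c * D 0 i)) *m U).
rewrite hadj_mul hadj_diag mulmxA -(mulmxA (hadj U)).
have -> : diag_mx (map_mx Num.conj (\row_i sqrtC (1 + c * D 0 i))) *m
          diag_mx (\row_i sqrtC (1 + c * D 0 i)) = 1%:M + c *: diag_mx D.
  apply/matrixP => i j; rewrite mul_diag_mx !mxE.
  case: (i =P j) => [->|_]; last by rewrite !mulr0n mulr0 add0r mulr0.
  by rewrite !mulr1n -normCKC ger0_norm ?sqrtC_ge0 // sqrtCK.
by rewrite mulmxDr mulmxDl mulmx1 UhU -scalemxAr -scalemxAl -Uinv -HU.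
Qed.
End Adjoint.

Lemma sum_indicator_mul (K : pzRingType) n (F : 'I_n -> K) i :
  \sum_j (i == j)%:R * F j = F i.
Proof.
rewrite (bigD1 i) //= eqxx mul1r big1 ?addr0 // => j ji.
by rewrite eq_sym (negPf ji) mul0r.
Qed.

Lemma delta_mulmxE (K : pzSemiRingType) m n p (k : 'I_m) (l : 'I_n)
    (M : 'M[K]_(n, p)) i j :
  (delta_mx k l *m M) i j = (i == k)%:R * M l j.
Proof.
rewrite mxE (bigD1 l) //= big1 ?addr0 => [|l' l'l]; first by rewrite mxE eqxx andbT.
by rewrite mxE (negPf l'l) andbF mul0r.
Qed.

Lemma mulmx_deltaE (K : pzSemiRingType) m n p (k : 'I_n) (l : 'I_p)
    (M : 'M[K]_(m, n)) i j :
  (M *m delta_mx k l) i j = M i k * (j == l)%:R.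
Proof.
rewrite mxE (bigD1 k) //= big1 ?addr0 => [|k' k'k]; first by rewrite mxE eqxx.
by rewrite mxE (negPf k'k) mulr0.
Qed.

Section Choi.
Variable R : realType.
Local Notation C := R[i].

Lemma choiE d1 d2 (Phi : 'M[C]_d1 -> 'M[C]_d2) r i s j :
  choi Phi (mxtens_index (r, i)) (mxtens_index (s, j)) = Phi (delta_mx r s) i j.
Proof.
rewrite /choi summxE; under eq_bigr do rewrite summxE.
under eq_bigr do under eq_bigr do rewrite tensmxE mxE -mulnb natrM -mulrA.
by under eq_bigr do rewrite -mulr_sumr sum_indicator_mul; rewrite sum_indicator_mul.
Qed.

Lemma choi0 d1 d2 : choi (fun _ : 'M[C]_d1 => 0 : 'M[C]_d2) = 0.
Proof. by apply: big1 => r _; apply: big1 => s _; rewrite tensmx0. Qed.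

End Choi.

Section KrausFamily.
Variable R : realType.
Local Notation C := R[i].
Variables (d1 d2 : nat) (Ks : seq 'M[C]_(d2, d1)).
Local Notation N := (size Ks).

Definition kmap (M : 'M[C]_N) (X : 'M[C]_d1) : 'M[C]_d2 :=
  \sum_k \sum_l M k l *: (Ks`_k *m X *m hadj Ks`_l).

(* For hermitian [M], [kcomap M] is the adjoint of [kmap M] evaluated at the identity. *)
Definition kcomap (M : 'M[C]_N) : 'M[C]_d1 :=
  \sum_k \sum_l M l k *: (hadj Ks`_k *m Ks`_l).

Lemma big_kraus p q (F : 'M[C]_(d2, d1) -> 'M[C]_(p, q)) :
  \sum_(K <- Ks) F K = \sum_(k < N) F Ks`_k.
Proof. by rewrite (big_nth 0) big_mkord. Qed.

Lemma kmap1 X : kmap 1%:M X = \sum_(K <- Ks) K *m X *m hadj K.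
Proof.
rewrite big_kraus; apply: eq_bigr => k _.
rewrite (bigD1 k) //= big1 ?addr0 => [|l lk]; first by rewrite mxE eqxx scale1r.
by rewrite mxE eq_sym (negPf lk) scale0r.
Qed.

Lemma kcomap1 : kcomap 1%:M = \sum_(K <- Ks) hadj K *m K.
Proof.
rewrite big_kraus; apply: eq_bigr => k _.
rewrite (bigD1 k) //= big1 ?addr0 => [|l lk]; first by rewrite mxE eqxx scale1r.
by rewrite mxE (negPf lk) scale0r.
Qed.

Lemma kmapD M1 M2 X : kmap (M1 + M2) X = kmap M1 X + kmap M2 X.
Proof.
rewrite /kmap -big_split; apply: eq_bigr => k _; rewrite -big_split.
by apply: eq_bigr => l _; rewrite mxE scalerDl.
Qed.

Lemma kmapZ a M X : kmap (a *: M) X = a *: kmap M X.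
Proof.
rewrite /kmap scaler_sumr; apply: eq_bigr => k _; rewrite scaler_sumr.
by apply: eq_bigr => l _; rewrite mxE scalerA.
Qed.

Lemma kcomapD M1 M2 : kcomap (M1 + M2) = kcomap M1 + kcomap M2.
Proof.
rewrite /kcomap -big_split; apply: eq_bigr => k _; rewrite -big_split.
by apply: eq_bigr => l _; rewrite mxE scalerDl.
Qed.

Lemma kcomapZ a M : kcomap (a *: M) = a *: kcomap M.
Proof.
rewrite /kcomap scaler_sumr; apply: eq_bigr => k _; rewrite scaler_sumr.
by apply: eq_bigr => l _; rewrite mxE scalerA.
Qed.

Lemma kmap_hadj M : kmap (hadj M) 1%:M = hadj (kmap M 1%:M).
Proof.
rewrite /kmap hadj_sum exchange_big; apply: eq_bigr => k _; rewrite hadj_sum.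
by apply: eq_bigr => l _; rewrite hadjZ !mulmx1 hadj_mul hadjK hadjE.
Qed.

Lemma kcomap_hadj M : kcomap (hadj M) = hadj (kcomap M).
Proof.
rewrite /kcomap hadj_sum exchange_big; apply: eq_bigr => k _; rewrite hadj_sum.
by apply: eq_bigr => l _; rewrite hadjZ hadj_mul hadjK hadjE.
Qed.

Lemma mxtrace_kcomap M : \tr (kcomap M) = \tr (kmap M 1%:M).
Proof.
have tr_sum n I (r : seq I) (F : I -> 'M[C]_n) :
    \tr (\sum_(i <- r) F i) = \sum_(i <- r) \tr (F i).
  exact: (big_morph _ (@mxtraceD _ n) (@mxtrace0 _ n)).
rewrite /kcomap /kmap !tr_sum.
under eq_bigr do rewrite tr_sum.
under [RHS]eq_bigr do rewrite tr_sum.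
rewrite exchange_big; apply: eq_bigr => k _; apply: eq_bigr => l _.
by rewrite !mxtraceZ mulmx1 mxtrace_mulC.
Qed.

Definition gram_kraus (G : 'M[C]_N) : seq 'M[C]_(d2, d1) :=
  [seq \sum_k (G a k)^* *: Ks`_k | a <- enum 'I_N].

Lemma kmap_gram G X :
  \sum_(L <- gram_kraus G) L *m X *m hadj L = kmap (hadj G *m G) X.
Proof.
have expand (c e : 'I_N -> C) :
    (\sum_k c k *: Ks`_k) *m X *m hadj (\sum_l e l *: Ks`_l) =
    \sum_k \sum_l (c k * (e l)^*) *: (Ks`_k *m X *m hadj Ks`_l).
  rewrite hadj_sum !mulmx_suml; apply: eq_bigr => k _; rewrite mulmx_sumr.
  by apply: eq_bigr => l _; rewrite hadjZ -!scalemxAl -scalemxAr scalerA.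
rewrite /kmap /gram_kraus big_map big_enum /=.
under eq_bigr do rewrite expand.
rewrite exchange_big; apply: eq_bigr => k _; rewrite exchange_big; apply: eq_bigr => l _.
by rewrite mxE scaler_suml; apply: eq_bigr => a _; rewrite hadjE conjCK.
Qed.

Lemma kcomap_gram G :
  \sum_(L <- gram_kraus G) hadj L *m L = kcomap (hadj G *m G).
Proof.
have expand (c e : 'I_N -> C) :
    hadj (\sum_k c k *: Ks`_k : 'M_(d2, d1)) *m (\sum_l e l *: Ks`_l) =
    \sum_k \sum_l ((c k)^* * e l) *: (hadj Ks`_k *m Ks`_l).
  rewrite hadj_sum !mulmx_suml; apply: eq_bigr => k _; rewrite mulmx_sumr.
  by apply: eq_bigr => l _; rewrite hadjZ -scalemxAl -scalemxAr scalerA.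
rewrite /kcomap /gram_kraus big_map big_enum /=.
under eq_bigr do rewrite expand.
rewrite exchange_big; apply: eq_bigr => k _; rewrite exchange_big; apply: eq_bigr => l _.
by rewrite mxE scaler_suml; apply: eq_bigr => a _; rewrite hadjE conjCK mulrC.
Qed.

Lemma CPset_kmap_gram (G : 'M[C]_N) :
  CPset (kcomap (hadj G *m G)) (kmap (hadj G *m G) 1%:M) (kmap (hadj G *m G)).
Proof.
exists (gram_kraus G); split; [by move=> X; rewrite kmap_gram | exact: kcomap_gram |].
by rewrite -kmap_gram; apply: eq_bigr => L _; rewrite mulmx1.
Qed.

Definition kraus_mx : 'M[C]_(N, d1 * d2) :=
  \matrix_(k, p) Ks`_k (mxtens_unindex p).2 (mxtens_unindex p).1.

Lemma choi_kmap M : choi (kmap M) = kraus_mx^T *m M *m map_mx Num.conj kraus_mx.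
Proof.
apply/matrixP => p q.
case: p / (mxtens_indexP p) => r i; case: q / (mxtens_indexP q) => s j.
rewrite choiE /kmap summxE mxE.
under [RHS]eq_bigr do rewrite mxE mulr_suml.
rewrite exchange_big; apply: eq_bigr => k _; rewrite summxE; apply: eq_bigr => l _.
by rewrite mxE mulmx_delta_hadjE !mxE !mxtens_indexK /= mulrA [_ * M k l]mulrC.
Qed.

Section ExtremeKernel.
Hypothesis ext : extreme_point (CPset (kcomap 1%:M) (kmap 1%:M 1%:M)) (kmap 1%:M).

Lemma extreme_kmap_hermitian_eq0 H : hadj H = H ->
  kcomap H = 0 -> kmap H 1%:M = 0 -> forall X, kmap H X = 0.
Proof.
move=> Hherm HQ HP; have [_ extP] := ext.
have [eps eps_gt0 gram] := hermitian_gram_perturb Hherm.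
have CPc c : c \is Num.real -> `|c| <= eps ->
    CPset (kcomap 1%:M) (kmap 1%:M 1%:M) (kmap (1%:M + c *: H)).
  move=> creal cle; have [G GG] := gram c creal cle.
  have := CPset_kmap_gram G.
  by rewrite GG kcomapD kcomapZ HQ kmapD kmapZ HP !scaler0 !addr0.
have epsr : eps \is Num.real by rewrite ger0_real ?ltW.
have half_gt0 : 0 < 2%:R^-1 :> C by rewrite invr_gt0 ltr0n.
have half_lt1 : 2%:R^-1 < 1 :> C by rewrite invf_lt1 ?ltr0n // ltr1n.
have mid X : kmap 1%:M X = 2%:R^-1 *: kmap (1%:M + eps *: H) X +
                           (1 - 2%:R^-1) *: kmap (1%:M + (- eps) *: H) X.
  have -> : 1 - 2%:R^-1 = 2%:R^-1 :> C by field.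
  rewrite -scalerDr !kmapD !kmapZ addrACA scaleNr subrr addr0.
  rewrite -[in RHS](scale1r (kmap 1%:M X)) -scalerDl scalerA.
  have -> : 2%:R^-1 * (1 + 1) = 1 :> C by field.
  by rewrite scale1r.
have eps_le : `|eps| <= eps by rewrite ger0_norm ?lexx // ltW.
have nepsr : - eps \is Num.real by rewrite rpredN.
have neps_le : `|- eps| <= eps by rewrite normrN.
have [E _] := extP _ _ _ (CPc eps epsr eps_le) (CPc (- eps) nepsr neps_le)
  half_gt0 half_lt1 mid.
move=> X; have := congr1 (fun f => f X) E; rewrite /= kmapD kmapZ.
rewrite -[RHS]addr0 => /addrI /eqP; rewrite scaler_eq0 (gt_eqF eps_gt0) /=.
by move/eqP.
Qed.

Lemma extreme_kmap_eq0 H :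
  kcomap H = 0 -> kmap H 1%:M = 0 -> forall X, kmap H X = 0.
Proof.
move=> HQ HP.
pose Hc (a : C) := a *: H + a^* *: hadj H.
have Hc_eq0 a X : kmap (Hc a) X = 0.
  apply: extreme_kmap_hermitian_eq0.
  - by rewrite /Hc hadjD !hadjZ hadjK conjCK addrC.
  - by rewrite /Hc kcomapD !kcomapZ kcomap_hadj HQ hadj0 !scaler0 addr0.
  - by rewrite /Hc kmapD !kmapZ kmap_hadj HP hadj0 !scaler0 addr0.
have twoH : Hc 1 + (- 'i) *: Hc 'i = 2%:R *: H.
  rewrite /Hc conjC1 conjCi !scale1r scalerDr !scalerA mulNr mulrNN -expr2 sqrCi.
  by rewrite opprK scale1r scaleN1r addrACA subrr addr0 scaler_nat mulr2n.
move=> X; have : 2%:R *: kmap H X = 0.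
  by rewrite -kmapZ -twoH kmapD kmapZ !Hc_eq0 scaler0 addr0.
by move/eqP; rewrite scaler_eq0 pnatr_eq0 => /eqP.
Qed.
End ExtremeKernel.

End KrausFamily.

Arguments kmap {R d1 d2} Ks M X.
Arguments kcomap {R d1 d2} Ks M.

Section ChoiRankBound.
Variable R : realType.
Local Notation C := R[i].

Lemma extreme_choi_rank_lt d1 d2 (A : 'M[C]_d1) (B : 'M[C]_d2) Phi : (0 < d1)%N ->
  extreme_point (CPset A B) Phi ->
  (choi_rank Phi * choi_rank Phi < d1 * d1 + d2 * d2)%N.
Proof.
move=> d1_gt0 ext; have [[Ks [PhiE KsA KsB]] _] := ext.
have Phi_kmap : Phi = kmap Ks 1%:M by apply: funext => X; rewrite PhiE kmap1.
have ext1 : extreme_point (CPset (kcomap Ks 1%:M) (kmap Ks 1%:M 1%:M)) (kmap Ks 1%:M).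
  rewrite kcomap1 KsA kmap1 -Phi_kmap.
  by under eq_bigr do rewrite mulmx1; rewrite KsB.
set V := kraus_mx Ks.
have [S [T ST_inj]] := mulmx_sandwich_inj V^T (map_mx Num.conj V).
have choiV : choi Phi = V^T *m map_mx Num.conj V by rewrite Phi_kmap choi_kmap mulmx1.
rewrite /choi_rank choiV ltnNge; apply/negP => rk_ge.
set r := \rank _ in S T ST_inj rk_ge.
pose coef (u : 'rV[C]_(r * r)) := S *m vec_mx u *m T.
pose g u := row_mx (mxvec (kcomap Ks (coef u))) (mxvec (kmap Ks (coef u) 1%:M)).
have g_linear : linear g.
  move=> a u v; rewrite /g /coef linearP /= mulmxDr mulmxDl -scalemxAr -scalemxAl.
  by rewrite kcomapD kcomapZ kmapD kmapZ !linearP /= scale_row_mx add_row_mx.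
pose gl : {linear 'rV[C]_(r * r) -> 'rV[C]_(d1 * d1 + d2 * d2)} :=
  HB.pack g (GRing.isLinear.Build _ _ _ _ g g_linear).
pose w := col_mx (mxvec (1%:M : 'M[C]_d1))^T (- (mxvec (1%:M : 'M[C]_d2))^T).
have w_neq0 : w != 0.
  rewrite col_mx_eq0 negb_and trmx_eq0 mxvec_eq0 -mxrank_eq0 mxrank1.
  by rewrite -lt0n d1_gt0.
have gw : lin1_mx gl *m w = 0.
  apply/row_matrixP => i; rewrite row_mul rowE mul_rV_lin1 /= row0.
  by rewrite /g mul_row_col mulmxN !mxvec_mul_trmx1 mxtrace_kcomap subrr.
have [u u_neq0] := exists_left_kernel w_neq0 gw rk_ge.
rewrite mul_rV_lin1 /= /g -row_mx0 => /eq_row_mx [/eqP + /eqP].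
rewrite !mxvec_eq0 => /eqP coefQ /eqP coefP.
have coef0 : kmap Ks (coef u) = fun=> 0 by apply: funext; exact: extreme_kmap_eq0.
have := choi_kmap (coef u); rewrite coef0 choi0 => /esym/ST_inj/eqP.
by rewrite vec_mx_eq0 (negPf u_neq0).
Qed.
End ChoiRankBound.

Section DiagChannel.
Variable R : realType.
Local Notation C := R[i].
Variables (n d : nat) (B : 'M[C]_(n, d)).

Definition diag_kraus : seq 'M[C]_(n, d) := [seq delta_mx i i *m B | i <- enum 'I_n].

Definition diag_channel (X : 'M[C]_d) : 'M[C]_n :=
  \sum_(K <- diag_kraus) K *m X *m hadj K.

Lemma diag_channelE X i j : diag_channel X i j = (i == j)%:R * (B *m X *m hadj B) i i.
Proof.
rewrite /diag_channel /diag_kraus big_map big_enum /= summxE.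
under eq_bigr => k _.
  rewrite hadj_mul hadj_delta !mulmxA -!(mulmxA (delta_mx k k)).
  by rewrite delta_mulmxE mulmx_deltaE; over.
by rewrite sum_indicator_mul mulrC eq_sym.
Qed.

Lemma CPset_diag_channel c : (forall i, (B *m hadj B) i i = c) ->
  CPset (hadj B *m B) (c *: 1%:M) diag_channel.
Proof.
move=> Bdiag; exists diag_kraus; split=> //.
  rewrite /diag_kraus big_map big_enum /=.
  under eq_bigr => k _ do rewrite hadj_mul hadj_delta -mulmxA (mulmxA (delta_mx k k)) mul_delta_mx.
  by rewrite -mulmx_sumr -mulmx_suml -mx1_sum_delta mul1mx.
have -> : \sum_(K <- diag_kraus) K *m hadj K = diag_channel 1%:M.
  by apply: eq_bigr => K _; rewrite mulmx1.
by apply/matrixP => i j; rewrite diag_channelE mulmx1 Bdiag !mxE mulr_natr mulr_natl.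
Qed.
Lemma diag_channel_mix_rows (Ls Ms : seq 'M[C]_(n, d)) (t s : C) L i (v : 'rV[C]_d) :
  0 < t -> 0 <= s ->
  (forall X, diag_channel X = t *: \sum_(K <- Ls) K *m X *m hadj K +
                              s *: \sum_(K <- Ms) K *m X *m hadj K) ->
  L \in Ls -> (row i B *m hadj v) 0 0 = 0 -> (row i L *m hadj v) 0 0 = 0.
Proof.
move=> t_gt0 s_ge0 mix LLs Bv.
have sq_ge0 (K : 'M[C]_(n, d)) : 0 <= `|(row i K *m hadj v) 0 0| ^+ 2 by exact: exprn_ge0.
have := congr1 (fun M : 'M[C]_n => M i i) (mix (hadj v *m v)).
rewrite /= diag_channelE eqxx mul1r mulmx_rank1_hadj_diagE Bv normr0 expr0n /=.
have entry (P Q : 'M[C]_n) : (t *: P + s *: Q) i i = t * P i i + s * Q i i by rewrite !mxE.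
rewrite entry !summxE.
under eq_bigr do rewrite mulmx_rank1_hadj_diagE.
under [X in _ + _ * X]eq_bigr do rewrite mulmx_rank1_hadj_diagE.
move/esym/eqP; rewrite paddr_eq0 ?mulr_ge0 ?sumr_ge0 ?(ltW t_gt0) // => /andP [+ _].
rewrite mulf_eq0 (gt_eqF t_gt0) psumr_eq0 // => /allP /(_ L LLs).
by rewrite expf_eq0 /= normr_eq0 => /eqP.
Qed.

Section Dominated.
Variable c : C.
Hypotheses (c_neq0 : c != 0) (Bdiag : forall i, (B *m hadj B) i i = c).
Hypothesis Bnz : forall i j, (B *m hadj B) i j != 0.

(* Each Kraus operator [L] of a dominated channel is [diag(a_L) B]; comparing
   [sum_L L L^*] with [c I] entrywise, the nonvanishing entries of [B B^*] force the
   vectors [a_L] to be orthonormal in the sense [sum_L a_L(i) a_L(j)^* = delta_ij]. *)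
Lemma diag_channel_dominated A1 A2 B2 Phi1 Phi2 (t s : C) :
  CPset A1 (c *: 1%:M) Phi1 -> CPset A2 B2 Phi2 -> 0 < t -> 0 <= s ->
  (forall X, diag_channel X = t *: Phi1 X + s *: Phi2 X) -> Phi1 = diag_channel.
Proof.
move=> [Ls [Phi1E _ LsB]] [Ms [Phi2E _ _]] t_gt0 s_ge0 mix.
have mixK X : diag_channel X = t *: \sum_(K <- Ls) K *m X *m hadj K +
                              s *: \sum_(K <- Ms) K *m X *m hadj K.
  by rewrite mix Phi1E Phi2E.
pose a L := \row_i ((L *m hadj B) i i / (B *m hadj B) i i).
have LE L : L \in Ls -> L = diag_mx (a L) *m B.
  move=> LLs; apply: rows_proportional => [i|i v]; first by rewrite Bdiag.
  exact: diag_channel_mix_rows t_gt0 s_ge0 mixK LLs.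
have LXL L X i j : L \in Ls ->
    (L *m X *m hadj L) i j = a L 0 i * (a L 0 j)^* * (B *m X *m hadj B) i j.
  move=> /LE LE'; rewrite [in LHS]LE' hadj_mul hadj_diag !mulmxA mul_mx_diag mxE.
  rewrite -(mulmxA (diag_mx _)) -(mulmxA (diag_mx _)) mul_diag_mx mxE.
  by rewrite [map_mx _ _ _ _]mxE mulrAC.
have a_orth i j : \sum_(L <- Ls) a L 0 i * (a L 0 j)^* = (i == j)%:R.
  have := congr1 (fun M : 'M[C]_n => M i j) LsB; rewrite /= summxE !mxE.
  under eq_big_seq => L LLs do rewrite -{1}[L](mulmx1 L) LXL // mulmx1.
  rewrite -mulr_suml; case: eqVneq => [<-|ij]; rewrite ?mulr1n ?mulr0n ?mulr1 ?mulr0.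
    by rewrite Bdiag -{2}[c]mul1r => /(mulIf c_neq0).
  by move/eqP; rewrite mulf_eq0 (negPf (Bnz i j)) orbF => /eqP.
apply: funext => X; apply/matrixP => i j; rewrite Phi1E summxE diag_channelE.
under eq_big_seq => L LLs do rewrite LXL //.
rewrite -mulr_suml a_orth; case: eqVneq => [->|_]; by rewrite ?mul0r.
Qed.

Lemma diag_channel_extreme : extreme_point (CPset (hadj B *m B) (c *: 1%:M)) diag_channel.
Proof.
split=> [|Phi1 Phi2 t CP1 CP2 t_gt0 t_lt1 mix]; first exact: CPset_diag_channel.
have s_gt0 : 0 < 1 - t by rewrite subr_gt0.
split; first exact: diag_channel_dominated CP1 CP2 t_gt0 (ltW s_gt0) mix.
apply: diag_channel_dominated CP2 CP1 s_gt0 (ltW t_gt0) _ => X.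
by rewrite mix addrC.
Qed.
End Dominated.

Lemma diag_channel_choi_rank (r0 : 'I_d) : (forall i, B i r0 != 0) ->
  (n <= choi_rank diag_channel)%N.
Proof.
move=> Br0; rewrite /choi_rank.
pose f (i : 'I_n) : 'I_(d * n) := mxtens_index (r0, i).
set D := diag_mx (\row_i (B i r0 * (B i r0)^*)).
have subD : mxsub f f (choi diag_channel) = D.
  apply/matrixP => i j; rewrite /D !mxE choiE diag_channelE mulmx_delta_hadjE.
  by rewrite mulr_natl.
have D_unit : D \in unitmx.
  rewrite unitmxE det_diag unitfE; apply/prodf_neq0 => i _.
  by rewrite mxE mulf_neq0 // conjC_eq0.
by rewrite -[X in (X <= _)%N](mxrank_unit D_unit) -subD mxrank_mxsub.
Qed.

End DiagChannel.

Section ZFactor.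
Variable R : realType.
Local Notation C := R[i].
Variables (d m : nat).
Hypothesis d_gt0 : (0 < d)%N.

Let sc : C := sqrtC ((d * (d + m))%:R)^-1.
Let t : C := sqrtC (d.+1)%:R.
Let u : C := (1 - t) / d%:R.

(* The rows [g_a = u 1 + t e_a] (a < d) and [g = 1] (m times) satisfy
   [<g_a, g_b> = (d+1) delta_ab - 1], [<g_a, 1> = 1] and [<1, 1> = d], because
   [d u + t = 1] and [d u^2 + 2 t u = -1]. *)
Definition zrow (i : 'I_(d + m)) (c : 'I_d) : C :=
  match split i with inl a => u + t * (a == c)%:R | inr _ => 1 end.

Definition zfactor : 'M[C]_(d + m, d) := \matrix_(i, c) (sc * zrow i c).

Lemma zrow_lshift a c : zrow (lshift m a) c = u + t * (a == c)%:R.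
Proof. by rewrite /zrow -[lshift m a]/(unsplit (inl a)) unsplitK. Qed.

Lemma zrow_rshift b c : zrow (rshift d b) c = 1.
Proof. by rewrite /zrow -[rshift d b]/(unsplit (inr b)) unsplitK. Qed.

Let d_neq0 : d%:R != 0 :> C.
Proof. by rewrite pnatr_eq0 -lt0n. Qed.

Let dm_neq0 : d%:R + m%:R != 0 :> C.
Proof. by rewrite -natrD pnatr_eq0 addn_eq0 negb_and -lt0n d_gt0. Qed.

Let t_ge0 : 0 <= t. Proof. by rewrite sqrtC_ge0 ler0n. Qed.
Let t2 : t ^+ 2 = (d.+1)%:R. Proof. exact: sqrtCK. Qed.
Let sc2 : sc ^+ 2 = ((d * (d + m))%:R)^-1. Proof. exact: sqrtCK. Qed.

Let sc2_neq0 : sc ^+ 2 != 0.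
Proof. by rewrite sc2 invr_eq0 pnatr_eq0 muln_eq0 negb_or -!lt0n d_gt0 addn_gt0 d_gt0. Qed.

Let u_linear : d%:R * u + t = 1.
Proof. by rewrite /u; field. Qed.

Let u_quadratic : d%:R * u ^+ 2 + 2%:R * t * u = -1.
Proof.
have -> : d%:R * u ^+ 2 + 2%:R * t * u = (1 - t ^+ 2) / d%:R by rewrite /u; field.
by rewrite t2 -addn1 natrD; field.
Qed.

Lemma zrow_real i c : zrow i c \is Num.real.
Proof.
have t_real : t \is Num.real := ger0_real t_ge0.
have u_real : u \is Num.real by rewrite rpredM ?rpredB ?rpred1 ?rpredV ?realn.
case: (split_ordP i) => [a|b] ->; rewrite ?zrow_lshift ?zrow_rshift ?rpred1 //.
by apply: rpredD => //; apply: rpredM => //; exact: realn.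
Qed.

Lemma hadj_zfactor : hadj zfactor = zfactor^T.
Proof.
apply/matrixP => c i; rewrite hadjE !mxE conj_Creal //.
by rewrite rpredM ?zrow_real ?ger0_real ?sqrtC_ge0 ?invr_ge0 ?ler0n.
Qed.

Lemma zfactor_gramE i j :
  (zfactor *m hadj zfactor) i j = sc ^+ 2 * \sum_c zrow i c * zrow j c.
Proof.
rewrite hadj_zfactor mxE mulr_sumr; apply: eq_bigr => c _.
by rewrite !mxE mulrACA expr2.
Qed.

Lemma zrow_dot_ll a b :
  \sum_c zrow (lshift m a) c * zrow (lshift m b) c = t ^+ 2 * (a == b)%:R - 1.
Proof.
have expand (x y : C) : (u + t * x) * (u + t * y) =
    u ^+ 2 + x * (t * u) + y * (t * u) + x * (y * t ^+ 2) by ring.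
under eq_bigr do rewrite !zrow_lshift expand.
rewrite !big_split /= !sum_indicator_mul sumr_const card_ord -mulr_natl -u_quadratic.
by rewrite [b == a]eq_sym; ring.
Qed.

Lemma zrow_dot_lr a b : \sum_c zrow (lshift m a) c * zrow (rshift d b) c = 1.
Proof.
under eq_bigr do rewrite zrow_lshift zrow_rshift mulr1 [t * _]mulrC.
by rewrite big_split /= sumr_const card_ord -mulr_natl sum_indicator_mul u_linear.
Qed.

Lemma zrow_dot_rr a b : \sum_c zrow (rshift d a) c * zrow (rshift d b) c = d%:R.
Proof. by under eq_bigr do rewrite !zrow_rshift mulr1; rewrite sumr_const card_ord. Qed.

Lemma zfactor_gram_diag i : (zfactor *m hadj zfactor) i i = ((d + m)%:R)^-1.
Proof.
rewrite zfactor_gramE sc2; case: (split_ordP i) => [a|b] ->.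
  rewrite zrow_dot_ll eqxx mulr1 t2 -addn1 natrD addrK natrM.
  by field; rewrite dm_neq0 d_neq0.
by rewrite zrow_dot_rr natrM natrD; field; rewrite dm_neq0 d_neq0.
Qed.

Lemma zfactor_gram_neq0 i j : (zfactor *m hadj zfactor) i j != 0.
Proof.
rewrite zfactor_gramE mulf_neq0 //.
case: (split_ordP i) => [a|b] ->; case: (split_ordP j) => [a'|b'] ->.
- rewrite zrow_dot_ll t2; case: (eqVneq a a') => _; rewrite /= ?mulr1n ?mulr0n.
    by rewrite mulr1 -addn1 natrD addrK.
  by rewrite mulr0 sub0r oppr_eq0 oner_eq0.
- by rewrite zrow_dot_lr oner_neq0.
- by under eq_bigr do rewrite mulrC; rewrite zrow_dot_lr oner_neq0.
- by rewrite zrow_dot_rr.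
Qed.

Lemma zfactor_adj_mul : hadj zfactor *m zfactor = Zmx R d m.
Proof.
apply/matrixP => c c'; rewrite hadj_zfactor mxE big_split_ord /=.
have -> : \sum_(a < d) zfactor^T c (lshift m a) * zfactor (lshift m a) c' =
    sc ^+ 2 * (t ^+ 2 * (c == c')%:R - 1).
  have sym a b : zrow (lshift m a) b = zrow (lshift m b) a by rewrite !zrow_lshift eq_sym.
  under eq_bigr => a _ do rewrite !mxE mulrACA -expr2 (sym a c) (sym a c').
  by rewrite -mulr_sumr zrow_dot_ll.
have -> : \sum_(b < m) zfactor^T c (rshift d b) * zfactor (rshift d b) c' = sc ^+ 2 * m%:R.
  under eq_bigr do rewrite !mxE !zrow_rshift !mulr1 -expr2.
  by rewrite sumr_const card_ord mulr_natr.
rewrite /Zmx !mxE sc2 t2.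
case: eqP => _; rewrite ?mulr1n ?mulr0n ?mulr1 ?mulr0 ?addr0 ?add0r.
  by rewrite -natr1 !natrD natrM; field; rewrite d_neq0 dm_neq0.
by rewrite -natr1 !natrD natrM; field; rewrite d_neq0 dm_neq0.
Qed.

Lemma zfactor_col_neq0 i : zfactor i (Ordinal d_gt0) != 0.
Proof.
have sc_neq0 : sc != 0 by apply: contra sc2_neq0 => /eqP ->; rewrite expr0n.
rewrite mxE mulf_neq0 //; case: (split_ordP i) => [a|b] ->; last by rewrite zrow_rshift oner_neq0.
rewrite zrow_lshift; case: (eqVneq a (Ordinal d_gt0)) => _; rewrite /= ?mulr1n ?mulr0n.
  have E : d%:R * (u + t * 1) = 1 + (d%:R - 1) * t by rewrite /u; field.
  apply/eqP => ut0; move: E; rewrite ut0 mulr0 => /esym/eqP; rewrite gt_eqF //.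
  by apply: lt_le_trans ltr01 _; rewrite lerDl mulr_ge0 // subr_ge0 ler1n.
have t_neq1 : t != 1.
  apply: contra d_neq0 => /eqP t1.
  have : (d.+1)%:R = 1 :> C by rewrite -t2 t1 expr1n.
  by rewrite -natr1 -[X in _ = X]add0r => /addIr ->.
by rewrite mulr0 addr0 /u mulf_neq0 ?invr_eq0 // subr_eq0 eq_sym.
Qed.
End ZFactor.

Section MaxChoiRank.
Variable R : realType.
Local Notation C := R[i].
Variables (d1 d2 : nat) (A : 'M[C]_d1) (B : 'M[C]_d2).

Lemma extreme_choi_rank_le_MR Phi :
  extreme_point (CPset A B) Phi -> (choi_rank Phi <= MR A B)%N.
Proof.
move=> ext; have rk_lt : (choi_rank Phi < (d1 * d2).+1)%N by rewrite ltnS rank_leq_row.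
apply: (@leq_bigmax_cond _ _ (fun n : 'I__ => nat_of_ord n) (Ordinal rk_lt)).
by apply/asboolP; exists Phi.
Qed.

Lemma MR_le k :
  (forall Phi, extreme_point (CPset A B) Phi -> (choi_rank Phi <= k)%N) -> (MR A B <= k)%N.
Proof. by move=> rk_le; apply/bigmax_leqP => i /asboolP [Phi [/rk_le + <-]]. Qed.
End MaxChoiRank.

Local Close Scope ring_scope.

Theorem mainTheorem2 (R : realType) (d m : nat) :
  (2 <= d)%N -> (1 <= m)%N ->
  (d + m <= MR (Zmx R d m) (maxmixed R (d + m)))%N /\
  ((d ^ 2 < 2 * m + 2 * d + 2)%N ->
   MR (Zmx R d m) (maxmixed R (d + m)) = (d + m)%N).
Proof.
move=> d_ge2 _; have d_gt0 : (0 < d)%N by apply: leq_trans d_ge2.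
have c_neq0 : (((d + m)%:R)^-1 != 0 :> R[i])%R.
  by rewrite invr_eq0 pnatr_eq0 addn_eq0 negb_and -lt0n d_gt0.
have := diag_channel_extreme c_neq0 (@zfactor_gram_diag R d m d_gt0)
  (@zfactor_gram_neq0 R d m d_gt0).
rewrite zfactor_adj_mul // => ext.
have lower : (d + m <= MR (Zmx R d m) (maxmixed R (d + m)))%N.
  apply: leq_trans (extreme_choi_rank_le_MR ext).
  exact: diag_channel_choi_rank (@zfactor_col_neq0 R d m d_gt0).
split=> // small; apply/eqP; rewrite eqn_leq lower andbT.
apply: MR_le => Phi /(extreme_choi_rank_lt d_gt0) rk_lt.
rewrite -mulnn in small; nia.
Qed.
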